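(* For every $k\ge1$ and every $g\in B_k$, we have $g^2\in B_k'$.
   Context: Let $C_2=\{e,\sigma\}$ with $\sigma=(1,2)$. Define $B_1=C_2$ and $B_k=B_{k-1}\wr C_2$ for $k>1$ (the iterated permutational wreath product of $k$ copies of $C_2$, isomorphic to a Sylow $2$-subgroup of $S_{2^k}$), with elements written as wreath recursions $(g_1,g_2)\pi$, $g_1,g_2\in B_{k-1}$, $\pi\in C_2$, and multiplication $(g_1,g_2)\pi\cdot(h_1,h_2)\rho=(g_1h_{\pi(1)},g_2h_{\pi(2)})\pi\rho$. *)

From mathcomp Require Import all_boot all_fingroup all_solvable.
Set Implicit Arguments. Unset Strict Implicit. Unset Printing Implicit Defensive.

(* B_k realized as the group of automorphisms of the binary rooted tree of
   depth k, acting on the leaves = k.-tuple bool (binary words of length k).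
   A permutation p of the leaves is in B_(k+1) iff it is a wreath recursion
   (g_false, g_true) pi: there is pi (pi = true means the swap sigma) and
   for each first letter b an element q_b of B_k with
   p (b :: w) = (pi xor b) :: q_b w. *)
Fixpoint inB (k : nat) : {perm k.-tuple bool} -> bool :=
  match k return {perm k.-tuple bool} -> bool with
  | 0 => fun _ => true
  | k'.+1 => fun p =>
      [exists pi : bool, forall b : bool, exists q : {perm k'.-tuple bool},
         inB q && [forall w : k'.-tuple bool,
           p [tuple of b :: w] == [tuple of (pi (+) b) :: q w]]]
  end.

Definition B (k : nat) : {set {perm k.-tuple bool}} := [set p | inB p].

From mathcomp Require Import all_boot all_fingroup all_solvable.
Set Implicit Arguments. Unset Strict Implicit. Unset Printing Implicit Defensive.
Local Open Scope group_scope.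

(* In a group G generated by involutions every square lies in G': the elements
   whose square lies in G' form a subgroup, because
   (xy)^2 = x^2 [x, y^-1] y^2, and it contains the generators.  B_k is
   generated by involutions: by induction, an element (g_1, g_2) pi factors as
   (g_1, 1) (1, g_2) (1, 1) pi, where (1, 1) sigma is an involution and the
   maps g |-> (g, 1), g |-> (1, g) are morphisms sending involutions of
   B_(k-1) to involutions of B_k. *)

Section SquaresInInvolutionGenerated.

Variables (gT : finGroupType) (S : {set gT}).
Hypothesis involS : {in S, forall s, s ^+ 2 = 1}.

Lemma expg2M_commg (x y : gT) : (x * y) ^+ 2 = x ^+ 2 * [~ x, y^-1] * y ^+ 2.
Proof. by rewrite /commg /conjg !expg2 invgK !mulgA mulgKV mulgK. Qed.

Lemma sqr_gen_involutions_in_der1 : {in <<S>>, forall g, g ^+ 2 \in <<S>>^`(1)}.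
Proof.
set G := <<S>>.
have sqrG_group : group_set [set x in G | x ^+ 2 \in G^`(1)].
  apply/group_setP; split; first by rewrite inE group1 expg1n group1.
  move=> x y; rewrite !inE => /andP[Gx G'x2] /andP[Gy G'y2].
  rewrite groupM //= expg2M_commg groupMr // groupMl //.
  exact: mem_commg Gx (groupVr Gy).
have sGsqrG : G \subset Group sqrG_group.
  rewrite gen_subG; apply/subsetP=> s Ss.
  by rewrite inE mem_gen //= involS // group1.
by move=> g /(subsetP sGsqrG); rewrite inE => /andP[].
Qed.

End SquaresInInvolutionGenerated.

Section WreathRecursion.

Variables (k : nat) (pi : bool) (q : bool -> {perm k.-tuple bool}).

Definition wreath_fun (t : k.+1.-tuple bool) : k.+1.-tuple bool :=
  [tuple of pi (+) thead t :: q (thead t) (behead_tuple t)].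

Lemma wreath_fun_inj : injective wreath_fun.
Proof.
move=> t1 t2 /(congr1 val) /= [/(congr1 (addb pi))]; rewrite !addKb => eq_head.
rewrite eq_head => /val_inj/perm_inj/(congr1 val) /= eq_behead.
by rewrite (tuple_eta t1) (tuple_eta t2); apply: val_inj; rewrite /= eq_head eq_behead.
Qed.

Definition wreath : {perm k.+1.-tuple bool} := perm wreath_fun_inj.

Lemma wreathE (b : bool) (w : k.-tuple bool) :
  wreath [tuple of b :: w] = [tuple of pi (+) b :: q b w].
Proof.
rewrite permE /wreath_fun.
have -> : behead_tuple [tuple of b :: w] = w by apply: val_inj.
exact: val_inj.
Qed.

End WreathRecursion.

Lemma eq_wreath k pi (q1 q2 : bool -> {perm k.-tuple bool}) :
  q1 =1 q2 -> wreath pi q1 = wreath pi q2.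
Proof. by move=> eq_q; apply/permP=> t; rewrite (tuple_eta t) !wreathE eq_q. Qed.

Lemma wreathM k pi rho (q r : bool -> {perm k.-tuple bool}) :
  wreath pi q * wreath rho r = wreath (pi (+) rho) (fun b => q b * r (pi (+) b)).
Proof.
apply/permP=> t; rewrite (tuple_eta t) permM !wreathE permM.
by apply: val_inj; rewrite /= addbA (addbC rho).
Qed.

Lemma wreath1 k : wreath false (fun _ => 1 : {perm k.-tuple bool}) = 1.
Proof. by apply/permP=> t; rewrite {1}(tuple_eta t) wreathE !perm1 -tuple_eta. Qed.

Lemma wreath_in_B k pi (q : bool -> {perm k.-tuple bool}) :
  (forall b, q b \in B k) -> wreath pi q \in B k.+1.
Proof.
move=> Bq; rewrite inE /=; apply/existsP; exists pi; apply/forallP=> b.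
apply/existsP; exists (q b); have := Bq b; rewrite inE => -> /=.
by apply/forallP=> w; rewrite wreathE.
Qed.

Lemma B_wreathP k g :
  g \in B k.+1 -> exists pi, exists2 q, (forall b, q b \in B k) & g = wreath pi q.
Proof.
rewrite inE /= => /existsP[pi /forallP Bg].
have /existsP[q0 /andP[Bq0 /forallP q0E]] := Bg false.
have /existsP[q1 /andP[Bq1 /forallP q1E]] := Bg true.
exists pi, (fun b => if b then q1 else q0); first by case; rewrite inE.
apply/permP=> t; rewrite (tuple_eta t) wreathE.
by case: (thead t); apply/eqP; [apply: q1E | apply: q0E].
Qed.

Lemma group_set_B k : group_set (B k).
Proof.
elim: k => [|k IH]; apply/group_setP; split.
- by rewrite inE.
- by move=> x y; rewrite !inE.
- by rewrite -wreath1; apply: wreath_in_B => _; rewrite (group1 (Group IH)).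
move=> _ _ /B_wreathP[pi [q Bq ->]] /B_wreathP[rho [r Br ->]].
by rewrite wreathM; apply: wreath_in_B => b; apply: (groupM (G := Group IH)).
Qed.

Canonical B_group k := Group (group_set_B k).

Definition involutions_B k := [set s in B k | s ^+ 2 == 1].

Definition wreath_at k (c : bool) (x : {perm k.-tuple bool}) :=
  wreath false (fun b => if b == c then x else 1).

Lemma wreath_atM k c (x y : {perm k.-tuple bool}) :
  wreath_at c (x * y) = wreath_at c x * wreath_at c y.
Proof.
by rewrite /wreath_at wreathM; apply: eq_wreath => b /=; case: (b == c); rewrite ?mulg1.
Qed.

Lemma wreath_at1 k c : wreath_at c (1 : {perm k.-tuple bool}) = 1.
Proof. by rewrite /wreath_at -(wreath1 k); apply: eq_wreath => b; case: (b == c). Qed.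

Lemma wreath_at_in_B k c x : x \in B k -> wreath_at c x \in B k.+1.
Proof. by move=> Bx; apply: wreath_in_B => b; case: (b == c). Qed.

Lemma wreath_at_gen_involutions k c x :
  x \in <<involutions_B k>> -> wreath_at c x \in <<involutions_B k.+1>>.
Proof.
case/gen_prodgP=> n [s invs ->].
rewrite (big_morph (wreath_at c) (wreath_atM c) (wreath_at1 k c)).
apply: group_prod => i _; apply: mem_gen.
have /setIdP[Bs /eqP s2] := invs i.
by rewrite inE wreath_at_in_B //= expg2 -wreath_atM -expg2 s2 wreath_at1.
Qed.

Lemma root_swap_involution k :
  wreath true (fun _ => 1 : {perm k.-tuple bool}) \in involutions_B k.+1.
Proof.
rewrite inE wreath_in_B //= expg2 wreathM.
by rewrite -(wreath1 k); apply/eqP/eq_wreath => _; rewrite mulg1.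
Qed.

Lemma wreath_factor k pi (q : bool -> {perm k.-tuple bool}) :
  wreath pi q
  = wreath_at false (q false) * wreath_at true (q true) * wreath pi (fun _ => 1).
Proof. by rewrite !wreathM; apply: eq_wreath => -[]; rewrite /= ?mul1g ?mulg1. Qed.

Lemma B_gen_involutions k : B k :=: <<involutions_B k>>.
Proof.
apply/eqP; rewrite eqEsubset gen_subG; apply/andP; split; last first.
  by apply/subsetP => s /setIdP[].
elim: k => [|k IH]; apply/subsetP => g.
  have -> : g = 1 by apply/permP => t; rewrite perm1 (tuple0 t) (tuple0 (g _)).
  by rewrite group1.
case/B_wreathP=> pi [q Bq ->].
rewrite wreath_factor !groupM ?wreath_at_gen_involutions ?(subsetP IH) //.
by case: pi; [apply/mem_gen/root_swap_involution | rewrite wreath1 group1].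
Qed.

Theorem mainTheorem15 (k : nat) (hk : 1 <= k) (g : {perm k.-tuple bool}) :
  g \in B k -> (g ^+ 2)%g \in ((B k)^`(1))%g.
Proof.
rewrite B_gen_involutions; apply: sqr_gen_involutions_in_der1.
by move=> s /setIdP[_ /eqP].
Qed.
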